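(* Let $A, B, A', B'$ be countable sets, let $\mu_1 \in \mathcal{D}(A)$, $\mu_2 \in \mathcal{D}(B)$, and let $f \colon A \to \mathcal{D}(A')$, $g \colon B \to \mathcal{D}(B')$. Let $\Xi \subseteq A$ be a predicate, let $\Phi_1, \Phi_2 \subseteq A \times B$ and $\Psi \subseteq A' \times B'$ be relations, and assume $\Phi_1, \Phi_2$ are disjoint in the sense that for all $a, a' \in A$ and $b \in B$, if $a \in \Xi$ and $a' \notin \Xi$ then $(a,b) \notin \Phi_1$ or $(a',b) \notin \Phi_2$. Let $\varepsilon_1, \varepsilon_2, \varepsilon_1', \varepsilon_2', \delta_1, \delta_2, \delta_1', \delta_2' \geq 0$ be real numbers, and assume: (i) $\mu_1 \sim_{\varepsilon_1,\delta_1} \mu_2 : \Phi_1$; (ii) $\mu_1 \sim_{\varepsilon_2,\delta_2} \mu_2 : \Phi_2$; (iii) for all $a \in A$, $b \in B$ with $a \in \Xi$ and $(a,b) \in \Phi_1$, we have $f(a) \sim_{\varepsilon_1',\delta_1'} g(b) : \Psi$; (iv) for all $a \in A$, $b \in B$ with $a \notin \Xi$ and $(a,b) \in \Phi_2$, we have $f(a) \sim_{\varepsilon_2',\delta_2'} g(b) : \Psi$. Then $(\mu_1 \mathbin{>\!\!>\!\!=} f) \sim_{\varepsilon,\delta} (\mu_2 \mathbin{>\!\!>\!\!=} g) : \Psi$, where $\varepsilon = \max(\varepsilon_1 + \varepsilon_1', \varepsilon_2 + \varepsilon_2')$ and $\delta = \delta_1 + \delta_2 + \max(\delta_1', \delt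a_2')$.
   Context: For a countable set $A$, a (sub)distribution on $A$ is a function $\mu \colon A \to [0,1]$ with $\sum_{a \in A} \mu(a) \leq 1$; $\mathcal{D}(A)$ denotes the set of such. For $\mu \in \mathcal{D}(A)$ and $h \colon A \to \mathcal{D}(B)$, the bind is $(\mu \mathbin{>\!\!>\!\!=} h)(b) = \sum_{a \in A} \mu(a)\, h(a)(b)$. For a function $F \colon A \to [0,1]$, its expectation is $\mathbb{E}_\mu[F] = \sum_{a \in A} \mu(a) F(a)$. Approximate coupling: for countable $A, B$, a relation $\Phi \subseteq A \times B$, reals $\varepsilon, \delta \geq 0$, and $\mu_1 \in \mathcal{D}(A)$, $\mu_2 \in \mathcal{D}(B)$, we write $\mu_1 \sim_{\varepsilon,\delta} \mu_2 : \Phi$ (an $(\varepsilon,\delta)$-approximate $\Phi$-coupling exists) if for all functions $F \colon A \to [0,1]$ and $G \colon B \to [0,1]$ such that $F(a) \leq G(b)$ for all $(a,b) \in \Phi$, we have $\mathbb{E}_{\mu_1}[F] \leq e^{\varepsilon} \cdot \mathbb{E}_{\mu_2}[G] + \delta$. *)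

From HB Require Import structures.
From mathcomp Require Import all_boot all_order all_algebra.
From mathcomp Require Import all_classical all_reals all_analysis.
Set Implicit Arguments. Unset Strict Implicit. Unset Printing Implicit Defensive.
Import Order.TTheory GRing.Theory Num.Theory.
Local Open Scope classical_set_scope.
Local Open Scope ring_scope.

Section Defs.
Variable R : realType.

Definition is_subdistr (A : countType) (mu : A -> R) : Prop :=
  (forall a, 0 <= mu a <= 1) /\ (\esum_(a in [set: A]) (mu a)%:E <= 1)%E.

Definition expect (A : countType) (mu : A -> R) (F : A -> R) : \bar R :=
  \esum_(a in [set: A]) (mu a * F a)%:E.

(* bind: (mu >>= h)(b) = sum_a mu(a) h(a)(b)  (finite, <= 1, for subdistributions) *)
Definition dbind (A B : countType) (mu : A -> R) (h : A -> B -> R) : B -> R :=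
  fun b => fine (\esum_(a in [set: A]) (mu a * h a b)%:E).

Definition approx_coupling (A B : countType) (Phi : A -> B -> Prop)
    (eps delta : R) (mu1 : A -> R) (mu2 : B -> R) : Prop :=
  forall (F : A -> R) (G : B -> R),
    (forall a, 0 <= F a <= 1) -> (forall b, 0 <= G b <= 1) ->
    (forall a b, Phi a b -> F a <= G b) ->
    (expect mu1 F <= (expR eps)%:E * expect mu2 G + delta%:E)%E.
End Defs.

(* Put F' a := E_(f a)[F] and G' b := E_(g b)[G]; then E[F] and E[G] under the
   two binds are E_mu1[F'] and E_mu2[G'], and the continuation couplings give
   F' a <= e^eps_i' G' b + del_i' for Phi_i-related pairs, with i = 1 on Xi and
   i = 2 off Xi.  Clamping F' - del_i' and e^eps_i' G' to [0, 1] gives test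
   functions for the two couplings of mu1 and mu2: the first restricted to Xi on
   the left and to the Phi_1-image Q of Xi on the right, the second to the
   complements.  Disjointness is exactly what keeps the Phi_2-partners of points
   outside Xi outside Q.  Adding the two coupling inequalities, the right-hand
   tests recombine pointwise below e^eps G', and the left-hand ones cover F' up to
   max del1' del2'. *)

From HB Require Import structures.
From mathcomp Require Import all_boot all_order all_algebra.
From mathcomp Require Import all_classical all_reals all_analysis.
Set Implicit Arguments.
Unset Strict Implicit.
Unset Printing Implicit Defensive.
Import Order.TTheory GRing.Theory Num.Theory.

Local Open Scope classical_set_scope.
Local Open Scope ring_scope.

Section esum_lemmas.
Context {R : realType} {T : choiceType}.
Local Open Scope ereal_scope.

Lemma esumZl (c : R) (a : T -> \bar R) : (0 <= c)%R -> (forall i, 0 <= a i) ->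
  \esum_(i in [set: T]) (c%:E * a i) = c%:E * \esum_(i in [set: T]) a i.
Proof.
move=> c0 a0; rewrite /esum -ereal_supZl //; last first.
  by apply/set0P; exists 0; exists set0; [exact: fsets_set0 | rewrite fsbig_set0].
rewrite image_comp; congr ereal_sup; apply: eq_imagel => X _ /=.
by rewrite ge0_mule_fsumr.
Qed.

Lemma esum_swap {T' : choiceType} (a : T -> T' -> \bar R) :
  (forall i j, 0 <= a i j) ->
  \esum_(i in [set: T]) \esum_(j in [set: T']) a i j =
  \esum_(j in [set: T']) \esum_(i in [set: T]) a i j.
Proof.
move=> a0; rewrite !esum_esum //.
rewrite (reindex_esum ([set: T'] `*`` fun=> [set: T]) _ (fun k => (k.2, k.1))) //.
split=> [[x y] _ //|[x y] [x' y'] _ _ /= [-> ->] //|[x y] _].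
by exists (y, x).
Qed.
End esum_lemmas.

Section expectation.
Context {R : realType} {A : countType}.
Implicit Types (mu F G : A -> R).
Local Open Scope ereal_scope.

Lemma subdistr_ge0 mu : is_subdistr mu -> forall a, (0 <= mu a)%R.
Proof. by case=> mu01 _ a; case/andP: (mu01 a). Qed.

Lemma expect_ge0 mu F : (forall a, 0 <= mu a)%R -> (forall a, 0 <= F a)%R ->
  0 <= expect mu F.
Proof. by move=> mu0 F0; apply: esum_ge0 => a _; rewrite lee_fin mulr_ge0. Qed.

Lemma le_expect mu F G : (forall a, 0 <= mu a)%R -> (forall a, F a <= G a)%R ->
  expect mu F <= expect mu G.
Proof. by move=> mu0 FG; apply: le_esum => a _; rewrite lee_fin ler_wpM2l. Qed.

Lemma expectD mu F G : (forall a, 0 <= mu a)%R ->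
  (forall a, 0 <= F a)%R -> (forall a, 0 <= G a)%R ->
  expect mu (F \+ G)%R = expect mu F + expect mu G.
Proof.
move=> mu0 F0 G0; rewrite /expect -esumD => [|a _|a _]; last 2 first.
- by rewrite lee_fin mulr_ge0.
- by rewrite lee_fin mulr_ge0.
- by apply: eq_esum => a _; rewrite /= mulrDr EFinD.
Qed.

Lemma expectZl mu F (c : R) : (forall a, 0 <= mu a)%R -> (forall a, 0 <= F a)%R ->
  (0 <= c)%R -> expect mu (fun a => c * F a)%R = c%:E * expect mu F.
Proof.
move=> mu0 F0 c0; rewrite /expect -esumZl // => [|a]; last by rewrite lee_fin mulr_ge0.
by apply: eq_esum => a _; rewrite -EFinM mulrCA.
Qed.

Lemma expect_cst_le mu (c : R) : is_subdistr mu -> (0 <= c)%R ->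
  expect mu (cst c) <= c%:E.
Proof.
move=> [mu01 mu_le1] c0; rewrite /expect.
under eq_esum do rewrite /= mulrC EFinM.
rewrite esumZl // => [|a]; last by case/andP: (mu01 a).
by rewrite -[leRHS]mule1 lee_wpmul2l // lee_fin.
Qed.

Lemma expect_le1 mu F : is_subdistr mu -> (forall a, F a <= 1)%R ->
  expect mu F <= 1.
Proof.
move=> smu F1; have mu0 := subdistr_ge0 smu.
apply: (le_trans (y := expect mu (cst 1%R))); last exact: expect_cst_le.
exact: le_expect.
Qed.

Lemma expect_fin_num mu F : is_subdistr mu -> (forall a, 0 <= F a <= 1)%R ->
  expect mu F \is a fin_num.
Proof.
move=> smu F01; have mu0 := subdistr_ge0 smu.
have [F0 F1] : (forall a, 0 <= F a)%R /\ (forall a, F a <= 1)%R.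
  by split=> a; case/andP: (F01 a).
rewrite ge0_fin_numE ?expect_ge0 //.
by rewrite (le_lt_trans (expect_le1 smu F1)) // ltry.
Qed.

Lemma fine_expect_itv mu F : is_subdistr mu -> (forall a, 0 <= F a <= 1)%R ->
  (0 <= fine (expect mu F) <= 1)%R.
Proof.
move=> smu F01; have mu0 := subdistr_ge0 smu.
have [F0 F1] : (forall a, 0 <= F a)%R /\ (forall a, F a <= 1)%R.
  by split=> a; case/andP: (F01 a).
rewrite -lee_fin -(lee_fin _ 1) fineK ?expect_fin_num //.
by rewrite expect_ge0 // expect_le1.
Qed.
End expectation.

Lemma expect_dbind (R : realType) (A A' : countType) (mu : A -> R)
    (h : A -> A' -> R) (F : A' -> R) :
  is_subdistr mu -> (forall a, is_subdistr (h a)) -> (forall x, 0 <= F x <= 1) ->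
  expect (dbind mu h) F = expect mu (fun a => fine (expect (h a) F)).
Proof.
move=> smu sh F01.
have mu0 := subdistr_ge0 smu.
have h0 a := subdistr_ge0 (sh a).
have F0 x : 0 <= F x by case/andP: (F01 x).
rewrite /expect /dbind; transitivity
  (\esum_(x in [set: A']) \esum_(a in [set: A]) (mu a * (h a x * F x))%:E)%E.
  apply: eq_esum => x _.
  have hx_fin : expect mu (h^~ x) \is a fin_num.
    by apply: expect_fin_num => // a; case: (sh a) => /(_ x).
  rewrite EFinM fineK // muleC -esumZl // => [|a]; last by rewrite lee_fin mulr_ge0.
  by apply: eq_esum => a _; rewrite -EFinM mulrA [in RHS]mulrC.
rewrite esum_swap => [|x a]; last by rewrite lee_fin !mulr_ge0.
apply: eq_esum => a _.
rewrite EFinM fineK ?(expect_fin_num (sh a) F01) // -esumZl // => x.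
by rewrite lee_fin mulr_ge0.
Qed.

Section clamp01.
Context {R : realDomainType}.
Implicit Types x y : R.

Definition clamp01 x : R := Num.max 0 (Num.min 1 x).

Lemma clamp01_itv x : 0 <= clamp01 x <= 1.
Proof. by rewrite le_max lexx ge_max ler01 ge_min lexx. Qed.

Lemma le_clamp01 : {homo clamp01 : x y / x <= y}.
Proof. by move=> x y xy; rewrite le_max2 // le_min2. Qed.

Lemma le1_clamp01 x : x <= 1 -> x <= clamp01 x.
Proof. by move=> x1; rewrite le_max le_min x1 lexx orbT. Qed.

Lemma ge0_clamp01 x : 0 <= x -> clamp01 x <= x.
Proof. by move=> x0; rewrite ge_max x0 ge_min lexx orbT. Qed.
End clamp01.

Lemma indic_mul_ge0 (R : numDomainType) (T : Type) (P : set T) (H : T -> R) :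
  (forall t, 0 <= H t) -> forall t, 0 <= (\1_P \* H) t.
Proof. by move=> H0 t; rewrite /= mulr_ge0. Qed.

Lemma indic_mul_itv (R : numDomainType) (T : Type) (P : set T) (H : T -> R) :
  (forall t, 0 <= H t <= 1) -> forall t, 0 <= (\1_P \* H) t <= 1.
Proof.
by move=> H01 t; rewrite /= indicE; case: (t \in P); rewrite ?mul1r ?mul0r ?lexx ?ler01.
Qed.

Section approx_coupling_lemmas.
Context {R : realType} {A B : countType}.
Variables (Phi : A -> B -> Prop) (eps delta : R) (mu1 : A -> R) (mu2 : B -> R).
Hypothesis coupling : approx_coupling Phi eps delta mu1 mu2.

Lemma approx_coupling_indic (P : set A) (Q : set B) (H : A -> R) (K : B -> R) :
  (forall a, 0 <= H a <= 1) -> (forall b, 0 <= K b <= 1) ->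
  (forall a b, P a -> Phi a b -> Q b /\ H a <= K b) ->
  (expect mu1 (\1_P \* H)%R <= (expR eps)%:E * expect mu2 (\1_Q \* K)%R + delta%:E)%E.
Proof.
move=> H01 K01 PQ; apply: coupling; try exact: indic_mul_itv.
move=> a b ab /=; rewrite !indicE; have [/set_mem Pa|_] := boolP (a \in P).
  by have [Qb HK] := PQ a b Pa ab; rewrite mem_set // !mul1r.
by rewrite mul0r; case/andP: (indic_mul_itv Q K01 b).
Qed.

Lemma approx_coupling_fine (F : A -> R) (G : B -> R) :
  is_subdistr mu1 -> is_subdistr mu2 ->
  (forall a, 0 <= F a <= 1) -> (forall b, 0 <= G b <= 1) ->
  (forall a b, Phi a b -> F a <= G b) ->
  fine (expect mu1 F) <= expR eps * fine (expect mu2 G) + delta.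
Proof.
move=> s1 s2 F01 G01 FG; have := coupling F01 G01 FG.
by rewrite -lee_fin EFinD EFinM !fineK ?expect_fin_num.
Qed.
End approx_coupling_lemmas.

Section split_coupling.
Context {R : realType} {A B : countType}.
Variables (mu1 : A -> R) (mu2 : B -> R) (Xi : set A) (Phi1 Phi2 : A -> B -> Prop).
Variables (eps1 eps2 eps1' eps2' del1 del2 del1' del2' : R) (F : A -> R) (G : B -> R).
Hypotheses (mu1_sub : is_subdistr mu1) (mu2_ge0 : forall b, 0 <= mu2 b).
Hypotheses (F_le1 : forall a, F a <= 1) (G_ge0 : forall b, 0 <= G b).
Hypotheses (del1'_ge0 : 0 <= del1') (del2'_ge0 : 0 <= del2').

Let Q : set B := [set b | exists2 a, Xi a & Phi1 a b].
Let H1 a := clamp01 (F a - del1').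
Let H2 a := clamp01 (F a - del2').
Let K1 b := clamp01 (expR eps1' * G b).
Let K2 b := clamp01 (expR eps2' * G b).

Lemma expect_le_split_tests : (expect mu1 F <=
  expect mu1 (\1_Xi \* H1)%R + expect mu1 (\1_(~` Xi) \* H2)%R +
  (Num.max del1' del2')%:E)%E.
Proof.
have mu1_ge0 := subdistr_ge0 mu1_sub.
have H1_ge0 a : 0 <= H1 a by case/andP: (clamp01_itv (F a - del1')).
have H2_ge0 a : 0 <= H2 a by case/andP: (clamp01_itv (F a - del2')).
have F_le_H d a : 0 <= d -> F a <= clamp01 (F a - d) + d.
  by move=> d0; rewrite -lerBlDr le1_clamp01 // lerBlDr (le_trans (F_le1 a)) // lerDl.
have F_le a : F a <= (\1_Xi \* H1 \+ \1_(~` Xi) \* H2 \+ cst (Num.max del1' del2')) a.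
  rewrite /= indicC indicE; case: (a \in Xi) => /=.
    rewrite mul1r mul0r addr0 (le_trans (F_le_H _ _ del1'_ge0)) //.
    by rewrite lerD2l le_max lexx.
  rewrite mul0r mul1r add0r (le_trans (F_le_H _ _ del2'_ge0)) //.
  by rewrite lerD2l le_max lexx orbT.
apply: le_trans (le_expect mu1_ge0 F_le) _.
rewrite !expectD //.
- by rewrite leeD2l // expect_cst_le // le_max del1'_ge0.
- exact: indic_mul_ge0.
- exact: indic_mul_ge0.
- by move=> a; rewrite addr_ge0 // indic_mul_ge0.
- by move=> a; rewrite /= le_max del1'_ge0.
Qed.

Lemma split_tests_le_expect :
  ((expR eps1)%:E * expect mu2 (\1_Q \* K1)%R +
   (expR eps2)%:E * expect mu2 (\1_(~` Q) \* K2)%R <=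
   (expR (Num.max (eps1 + eps1') (eps2 + eps2')))%:E * expect mu2 G)%E.
Proof.
have K1_ge0 b : 0 <= K1 b by case/andP: (clamp01_itv (expR eps1' * G b)).
have K2_ge0 b : 0 <= K2 b by case/andP: (clamp01_itv (expR eps2' * G b)).
have expR_mul_K e e' b : expR e * clamp01 (expR e' * G b) <= expR (e + e') * G b.
  rewrite expRD -mulrA ler_wpM2l ?expR_ge0 // ge0_clamp01 //.
  by rewrite mulr_ge0 ?expR_ge0.
have K_le b : expR eps1 * (\1_Q \* K1) b + expR eps2 * (\1_(~` Q) \* K2) b <=
    expR (Num.max (eps1 + eps1') (eps2 + eps2')) * G b.
  rewrite /= indicC indicE; case: (b \in Q) => /=.
    rewrite mul1r mul0r mulr0 addr0 (le_trans (expR_mul_K _ _ _)) //.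
    by rewrite ler_wpM2r // ler_expR le_max lexx.
  rewrite mul1r mul0r mulr0 add0r (le_trans (expR_mul_K _ _ _)) //.
  by rewrite ler_wpM2r // ler_expR le_max lexx orbT.
rewrite -!expectZl ?expR_ge0 //; try exact: indic_mul_ge0.
rewrite -expectD //; last 2 first.
- by move=> b; rewrite mulr_ge0 ?expR_ge0 ?indic_mul_ge0.
- by move=> b; rewrite mulr_ge0 ?expR_ge0 ?indic_mul_ge0.
exact: le_expect.
Qed.

Lemma expect_le_split_couplings :
  (forall a a' b, Xi a -> ~ Xi a' -> ~ Phi1 a b \/ ~ Phi2 a' b) ->
  approx_coupling Phi1 eps1 del1 mu1 mu2 ->
  approx_coupling Phi2 eps2 del2 mu1 mu2 ->
  (forall a b, Xi a -> Phi1 a b -> F a <= expR eps1' * G b + del1') ->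
  (forall a b, ~ Xi a -> Phi2 a b -> F a <= expR eps2' * G b + del2') ->
  (expect mu1 F <= (expR (Num.max (eps1 + eps1') (eps2 + eps2')))%:E * expect mu2 G
                   + (del1 + del2 + Num.max del1' del2')%:E)%E.
Proof.
move=> disj C1 C2 FG1 FG2.
have coupling1 : (expect mu1 (\1_Xi \* H1)%R <=
    (expR eps1)%:E * expect mu2 (\1_Q \* K1)%R + del1%:E)%E.
  apply: (approx_coupling_indic C1) => [a|b|a b Xa ab]; try exact: clamp01_itv.
  split; first by exists a.
  by apply: le_clamp01; rewrite lerBlDr; apply: FG1.
have coupling2 : (expect mu1 (\1_(~` Xi) \* H2)%R <=
    (expR eps2)%:E * expect mu2 (\1_(~` Q) \* K2)%R + del2%:E)%E.
  apply: (approx_coupling_indic C2) => [a|b|a b nXa ab]; try exact: clamp01_itv.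
  split; first by move=> [a' Xa' a'b]; case: (disj a' a b Xa' nXa).
  by apply: le_clamp01; rewrite lerBlDr; apply: FG2.
apply: le_trans expect_le_split_tests _.
apply: le_trans (leeD (leeD coupling1 coupling2) (lexx _)) _.
by rewrite !EFinD addeACA -[leLHS]addeA leeD // split_tests_le_expect.
Qed.
End split_coupling.

Theorem theorem5p2 (R : realType) (A B A' B' : countType)
  (mu1 : A -> R) (mu2 : B -> R) (f : A -> A' -> R) (g : B -> B' -> R)
  (Xi : A -> Prop) (Phi1 Phi2 : A -> B -> Prop) (Psi : A' -> B' -> Prop)
  (eps1 eps2 eps1' eps2' del1 del2 del1' del2' : R) :
  is_subdistr mu1 -> is_subdistr mu2 ->
  (forall a, is_subdistr (f a)) -> (forall b, is_subdistr (g b)) ->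
  (forall a a' b, Xi a -> ~ Xi a' -> ~ Phi1 a b \/ ~ Phi2 a' b) ->
  0 <= eps1 -> 0 <= eps2 -> 0 <= eps1' -> 0 <= eps2' ->
  0 <= del1 -> 0 <= del2 -> 0 <= del1' -> 0 <= del2' ->
  approx_coupling Phi1 eps1 del1 mu1 mu2 ->
  approx_coupling Phi2 eps2 del2 mu1 mu2 ->
  (forall a b, Xi a -> Phi1 a b -> approx_coupling Psi eps1' del1' (f a) (g b)) ->
  (forall a b, ~ Xi a -> Phi2 a b -> approx_coupling Psi eps2' del2' (f a) (g b)) ->
  approx_coupling Psi (Num.max (eps1 + eps1') (eps2 + eps2'))
    (del1 + del2 + Num.max del1' del2') (dbind mu1 f) (dbind mu2 g).
Proof.
(* Only del1' and del2' need to be nonnegative. *)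
move=> s1 s2 sf sg disj _ _ _ _ _ _ d1' d2' C1 C2 Cf1 Cf2 F G F01 G01 FG.
rewrite !expect_dbind //.
apply: (expect_le_split_couplings s1 (subdistr_ge0 s2) _ _ d1' d2' disj C1 C2)
  => [a|b|a b Xa ab|a b nXa ab].
- by case/andP: (fine_expect_itv (sf a) F01).
- by case/andP: (fine_expect_itv (sg b) G01).
- exact: (approx_coupling_fine (Cf1 a b Xa ab) (sf a) (sg b) F01 G01 FG).
- exact: (approx_coupling_fine (Cf2 a b nXa ab) (sf a) (sg b) F01 G01 FG).
Qed.
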